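(* Let $m,n\in\mathbb{N}$. Then $K_{n,n}\subseteq K_{m,n}$.
   Context: Thompson's group $F$ is the group of piecewise linear homeomorphisms of $[0,1]$ with finitely many dyadic breakpoints and slopes integer powers of $2$. An element $h\in F$ has the pair of branches $u\rightarrow v$ (for finite binary words $u,v$) if $h(.u\alpha)=.v\alpha$ for every infinite binary word $\alpha$. For $H\le F$ write $u\sim_H v$ if some $h\in H$ has the pair of branches $u\rightarrow v$. The closure $\mathrm{Cl}(H)$ is the subgroup of all $f\in F$ for which there is a finite subdivision of $[0,1]$ into intervals on each of which $f$ coincides with some element of $H$; $H$ is closed if $H=\mathrm{Cl}(H)$ (intersections of closed subgroups are closed). For $m,n\in\mathbb{N}$ let $d=\gcd(m,n)$; $K_{m,n}$ is the minimal closed subgroup $K$ of $F$ such that: (a) $0^k1\sim_K 0^{k+d}1$ for all $k\in\mathbb{N}$; (b) $1^k0\sim_K 1^{k+d}0$ for all $k\in\mathbb{N}$; (c) $0^k1\sim_K 1^{d+1-k}0$ for $1\le k\le d$; (d) $0^{2k}10\sim_K 1^{1+3(n-k)}0$ for $1\le k\le n$; (e) $0^{2k}11\sim_K 1^{2+3(n-k)}0$ for $1\le k\le n$; (f) $0^{2k-1}1\sim_K 1^{3(n-k+1)}0$ for $1\le k\le n$. In particular $K_{n,n}$ is defined with $d=n$. *)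

From Stdlib Require Import Reals ZArith Arith List.
From Coquelicot Require Import Coquelicot.
Import ListNotations.
Open Scope R_scope.

(* A finite binary word is a [list bool] ([false] = digit 0, [true] = digit 1);
   an infinite binary word is a map [nat -> bool]. *)
Definition word := list bool.

Definition prefix_word (u : word) (alpha : nat -> bool) : nat -> bool :=
  fun i => if Nat.ltb i (length u) then nth i u false else alpha (i - length u)%nat.

Definition binval (w : nat -> bool) : R :=
  Series (fun i => if w i then (/ 2) ^ (S i) else 0).

Definition zeros (k : nat) : word := repeat false k.
Definition ones (k : nat) : word := repeat true k.

Definition dyadic (x : R) : Prop :=
  exists (z : Z) (j : nat), x = IZR z / 2 ^ j.

(* f is (the extension by the identity outside [0,1] of) a piecewise linear
   homeomorphism of [0,1] with finitely many dyadic breakpoints and slopes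
   integer powers of 2.  Continuity is built in (pieces agree on closed
   intervals), positivity of slopes gives monotonicity, f 0 = 0, f 1 = 1. *)
Definition inF (f : R -> R) : Prop :=
  (forall x, (x < 0 \/ 1 < x) -> f x = x) /\
  f 0 = 0 /\ f 1 = 1 /\
  exists (k : nat) (p : nat -> R),
    p 0%nat = 0 /\ p k = 1 /\
    (forall i, (i < k)%nat -> p i < p (S i) /\ dyadic (p i)) /\
    (forall i, (i < k)%nat ->
       exists (a : Z) (b : R), forall x, p i <= x <= p (S i) ->
         f x = powerRZ 2 a * x + b).

Definition subgroupF (H : (R -> R) -> Prop) : Prop :=
  (forall f, H f -> inF f) /\
  H (fun x => x) /\
  (forall f g, H f -> H g -> H (fun x => f (g x))) /\
  (forall f, H f -> exists g, H g /\ forall x, g (f x) = x /\ f (g x) = x).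

Definition has_branches (h : R -> R) (u v : word) : Prop :=
  forall alpha : nat -> bool, h (binval (prefix_word u alpha)) = binval (prefix_word v alpha).

Definition simH (H : (R -> R) -> Prop) (u v : word) : Prop :=
  exists h, H h /\ has_branches h u v.

Definition Cl (H : (R -> R) -> Prop) (f : R -> R) : Prop :=
  inF f /\
  exists (k : nat) (p : nat -> R),
    p 0%nat = 0 /\ p k = 1 /\
    (forall i, (i < k)%nat -> p i < p (S i)) /\
    (forall i, (i < k)%nat ->
       exists h, H h /\ forall x, p i <= x <= p (S i) -> f x = h x).

Definition closedF (H : (R -> R) -> Prop) : Prop :=
  forall f, H f <-> Cl H f.

(* Conditions (a)-(f) defining K_{m,n}, with d = gcd(m,n) *)
Definition K_conditions (m n : nat) (K : (R -> R) -> Prop) : Prop :=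
  let d := Nat.gcd m n in
  (forall k : nat, simH K (zeros k ++ [true]) (zeros (k + d) ++ [true])) /\
  (forall k : nat, simH K (ones k ++ [false]) (ones (k + d) ++ [false])) /\
  (forall k : nat, (1 <= k <= d)%nat ->
     simH K (zeros k ++ [true]) (ones (d + 1 - k) ++ [false])) /\
  (forall k : nat, (1 <= k <= n)%nat ->
     simH K (zeros (2 * k) ++ [true; false]) (ones (1 + 3 * (n - k)) ++ [false])) /\
  (forall k : nat, (1 <= k <= n)%nat ->
     simH K (zeros (2 * k) ++ [true; true]) (ones (2 + 3 * (n - k)) ++ [false])) /\
  (forall k : nat, (1 <= k <= n)%nat ->
     simH K (zeros (2 * k - 1) ++ [true]) (ones (3 * (n - k + 1)) ++ [false])).

(* K_{m,n}: the minimal closed subgroup satisfying (a)-(f), i.e. the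
   intersection of all closed subgroups of F satisfying them. *)
Definition K_mn (m n : nat) : (R -> R) -> Prop :=
  fun f => forall K, subgroupF K -> closedF K -> K_conditions m n K -> K f.

(* Every closed subgroup satisfying the conditions for (m, n) also satisfies
   those for (n, n); since K_{n,n} is the intersection of all closed subgroups
   satisfying the latter, it lies in K_{m,n}.  Conditions (d)-(f) do not
   involve d.  For the others, d = gcd(m, n) divides n = gcd(n, n): iterating
   (a) and (b) gives the steps of length n, and 0^k 1 ~ 1^(n+1-k) 0 follows by
   reducing k - 1 modulo d and applying (c) once. *)
From Stdlib Require Import Reals Arith Lia List RelationClasses.
Import ListNotations.

Lemma step_iter_mul {A : Type} (Rel : A -> A -> Prop) `{PreOrder A Rel}
    (P : nat -> A) (d : nat) :
  (forall k, Rel (P k) (P (k + d)%nat)) ->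
  forall j k, Rel (P k) (P (k + j * d)%nat).
Proof.
  intros Hstep j. induction j as [|j IH]; intro k.
  - rewrite Nat.mul_0_l, Nat.add_0_r. reflexivity.
  - transitivity (P (k + j * d)%nat); [apply IH |].
    replace (k + S j * d)%nat with (k + j * d + d)%nat by lia. apply Hstep.
Qed.

Section SimH.

Variable K : (R -> R) -> Prop.
Hypothesis HK : subgroupF K.

#[local] Instance simH_Equivalence : Equivalence (simH K).
Proof.
  destruct HK as [_ [Hid [Hcomp Hinv]]]. split.
  - intro u. exists (fun x => x). split; [exact Hid | intro; reflexivity].
  - intros u v [h [Hh Huv]].
    destruct (Hinv h Hh) as [g [Hg Hgh]].
    exists g. split; [exact Hg |].
    intro alpha. rewrite <- Huv. apply Hgh.
  - intros u v w [h [Hh Huv]] [g [Hg Hvw]].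
    exists (fun x => g (h x)). split; [now apply Hcomp |].
    intro alpha. rewrite Huv. apply Hvw.
Qed.

Lemma simH_zeros_mul (d : nat) :
  (forall k, simH K (zeros k ++ [true]) (zeros (k + d) ++ [true])) ->
  forall j k, simH K (zeros k ++ [true]) (zeros (k + j * d) ++ [true]).
Proof. exact (step_iter_mul _ (fun k => zeros k ++ [true]) d). Qed.

Lemma simH_ones_mul (d : nat) :
  (forall k, simH K (ones k ++ [false]) (ones (k + d) ++ [false])) ->
  forall j k, simH K (ones k ++ [false]) (ones (k + j * d) ++ [false]).
Proof. exact (step_iter_mul _ (fun k => ones k ++ [false]) d). Qed.

Lemma simH_zeros_ones_mul (d q : nat) :
  (forall k, simH K (zeros k ++ [true]) (zeros (k + d) ++ [true])) ->
  (forall k, simH K (ones k ++ [false]) (ones (k + d) ++ [false])) ->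
  (forall k, (1 <= k <= d)%nat ->
     simH K (zeros k ++ [true]) (ones (d + 1 - k) ++ [false])) ->
  forall k, (1 <= k <= q * d)%nat ->
    simH K (zeros k ++ [true]) (ones (q * d + 1 - k) ++ [false]).
Proof.
  intros Hzeros Hones Hswap k Hk.
  assert (Hd : d <> 0%nat) by (intro E; subst d; lia).
  pose proof (Nat.div_mod (k - 1) d Hd) as Hdiv.
  pose proof (Nat.mod_upper_bound (k - 1) d Hd) as Hmod.
  set (j := ((k - 1) / d)%nat) in *. set (r := ((k - 1) mod d)%nat) in *.
  assert (Hj : (j < q)%nat) by nia.
  transitivity (zeros (r + 1) ++ [true]).
  { symmetry. replace k with (r + 1 + j * d)%nat by lia.
    now apply simH_zeros_mul. }
  transitivity (ones (d + 1 - (r + 1)) ++ [false]); [apply Hswap; lia |].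
  replace (q * d + 1 - k)%nat with (d + 1 - (r + 1) + (q - 1 - j) * d)%nat
    by nia.
  now apply simH_ones_mul.
Qed.

Lemma K_conditions_diag (m n : nat) :
  K_conditions m n K -> K_conditions n n K.
Proof.
  unfold K_conditions. rewrite Nat.gcd_diag.
  destruct (Nat.gcd_divide_r m n) as [q Hq].
  set (d := Nat.gcd m n) in *.
  intros [Ha [Hb [Hc Hdef]]].
  split; [| split; [| split]]; [| | | exact Hdef]; rewrite Hq.
  - intro k. now apply simH_zeros_mul.
  - intro k. now apply simH_ones_mul.
  - now apply simH_zeros_ones_mul.
Qed.

End SimH.

Theorem lemma3p4 (m n : nat) :
  forall f : R -> R, K_mn n n f -> K_mn m n f.
Proof.
  intros f Hf K HK HC Hcond.
  apply Hf; [exact HK | exact HC |].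
  exact (K_conditions_diag K HK m n Hcond).
Qed.
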